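(* Let $\{(\Gamma_t,\theta_t)\}_{t\in[0,\underline t)}$ be a solution of the framed curvature flow with $\theta$-velocity $\upsilon_\theta$, and let $\Sigma$ be its trajectory surface, parametrized by $(u,t)\mapsto\gamma(t,u)$. At points where $\kappa>0$, the mean curvature $H$ and the Gaussian curvature $K$ of $\Sigma$ are $$H=-\psi_2+\chi,\qquad K=-\psi_3^2-\psi_2\chi,$$ where $$\chi:=\frac{\upsilon_\theta}{\kappa}+\frac{\kappa\,\partial_s\psi_3+2\,\partial_s\kappa\,\psi_3}{\kappa^3}\,\psi_1+\frac{\partial_s^2\kappa-\kappa\,\psi_3^2}{\kappa^3}\,\psi_2 .$$
   Context: Let $S^1=\mathbb{R}/2\pi\mathbb{Z}$. A family of closed curves $\Gamma_t\subset\mathbb{R}^3$, $t\in[0,\underline t)$, is given by sufficiently smooth parametrizations $\gamma(t,\cdot):S^1\to\mathbb{R}^3$; $g:=\|\partial_u\gamma\|$, $ds=g\,du$, $\partial_s=g^{-1}\partial_u$. $T,N,B$ denote the Frenet frame, $\kappa$ the curvature and $\tau$ the torsion of $\Gamma_t$. For an angle function $\theta\in\mathcal C^{1,2}([0,\underline t)\times S^1;S^1)$, $\theta_t:=\theta(t,\cdot)$, define the $\theta$-normal $\nu_\theta=\cos\theta\,N+\sin\theta\,B$, the $\theta$-binormal $\beta_\theta=-\sin\theta\,N+\cos\theta\,B=T\times\nu_\theta$, and $\psi_1=\kappa\cos\theta$, $\psi_2=\kappa\sin\theta$, $\psi_3=\tau+\partial_s\theta$. The family solves the framed curvature flow with $\theta$-velocity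 $\upsilon_\theta\in\mathcal C^1([0,\underline t)\times S^1;\mathbb{R})$ if $\partial_t\gamma=\kappa\nu_\theta$ and $\partial_t\theta=\upsilon_\theta$ on $[0,\underline t)\times S^1$ (with given initial data). The trajectory surface is $\Sigma=\bigcup_{t\in[0,\underline t)}\Gamma_t$, parametrized by $\gamma(t,u)$. Its first and second fundamental forms are taken in the coordinates $(u,t)$ with respect to the unit normal $\beta_\theta$; $K=\det\mathrm{I\!I}/\det\mathrm{I}$ and the mean curvature is $H=\mathrm{tr}(\mathrm{I\!I}\,\mathrm{I}^{-1})$ (the sum of the principal curvatures). *)

From Stdlib Require Import Reals List.
From Coquelicot Require Import Coquelicot.
Open Scope R_scope.

Record V3 := mkV { vx : R; vy : R; vz : R }.

Definition vadd (a b : V3) : V3 := mkV (vx a + vx b) (vy a + vy b) (vz a + vz b).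
Definition vscal (c : R) (a : V3) : V3 := mkV (c * vx a) (c * vy a) (c * vz a).
Definition dot (a b : V3) : R := vx a * vx b + vy a * vy b + vz a * vz b.
Definition cross (a b : V3) : V3 :=
  mkV (vy a * vz b - vz a * vy b) (vz a * vx b - vx a * vz b) (vx a * vy b - vy a * vx b).
Definition vnorm (a : V3) : R := sqrt (dot a a).

(* scalar fields f t u ; t = time, u = curve parameter *)
Definition dt (f : R -> R -> R) : R -> R -> R := fun t u => Derive (fun t' => f t' u) t.
Definition du (f : R -> R -> R) : R -> R -> R := fun t u => Derive (fun u' => f t u') u.

Definition dtV (F : R -> R -> V3) : R -> R -> V3 := fun t u =>
  mkV (dt (fun t u => vx (F t u)) t u) (dt (fun t u => vy (F t u)) t u)
      (dt (fun t u => vz (F t u)) t u).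
Definition duV (F : R -> R -> V3) : R -> R -> V3 := fun t u =>
  mkV (du (fun t u => vx (F t u)) t u) (du (fun t u => vy (F t u)) t u)
      (du (fun t u => vz (F t u)) t u).

Fixpoint pder (w : list bool) (f : R -> R -> R) : R -> R -> R :=
  match w with
  | nil => f
  | b :: w' => if b then dt (pder w' f) else du (pder w' f)
  end.

Definition jcont (f : R -> R -> R) (t u : R) : Prop :=
  continuous (fun p : R * R => f (fst p) (snd p)) (t, u).

Definition smooth_on (P : R -> Prop) (f : R -> R -> R) : Prop :=
  forall (w : list bool) (t u : R), P t ->
    ex_derive (fun t' => pder w f t' u) t /\
    ex_derive (fun u' => pder w f t u') u /\
    jcont (pder w f) t u.

Definition smoothV_on (P : R -> Prop) (F : R -> R -> V3) : Prop :=
  smooth_on P (fun t u => vx (F t u)) /\ smooth_on P (fun t u => vy (F t u)) /\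
  smooth_on P (fun t u => vz (F t u)).

Definition C12_on (P : R -> Prop) (f : R -> R -> R) : Prop :=
  forall t u, P t ->
    ex_derive (fun t' => f t' u) t /\ ex_derive (fun u' => f t u') u /\
    ex_derive (fun u' => du f t u') u /\
    jcont f t u /\ jcont (dt f) t u /\ jcont (du f) t u /\ jcont (du (du f)) t u.

Definition C1_on (P : R -> Prop) (f : R -> R -> R) : Prop :=
  forall t u, P t ->
    ex_derive (fun t' => f t' u) t /\ ex_derive (fun u' => f t u') u /\
    jcont f t u /\ jcont (dt f) t u /\ jcont (du f) t u.

Section Geom.
Variable gam : R -> R -> V3.

Definition speed (t u : R) : R := vnorm (duV gam t u).
Definition ds (f : R -> R -> R) : R -> R -> R := fun t u => du f t u / speed t u.
Definition dsV (F : R -> R -> V3) : R -> R -> V3 := fun t u => vscal (/ speed t u) (duV F t u).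

Definition Tan : R -> R -> V3 := dsV gam.
Definition kappa (t u : R) : R := vnorm (dsV Tan t u).
Definition Nor (t u : R) : V3 := vscal (/ kappa t u) (dsV Tan t u).
Definition Bin (t u : R) : V3 := cross (Tan t u) (Nor t u).
Definition tors (t u : R) : R := dot (dsV Nor t u) (Bin t u).

Variable th : R -> R -> R.
Definition nuth (t u : R) : V3 :=
  vadd (vscal (cos (th t u)) (Nor t u)) (vscal (sin (th t u)) (Bin t u)).
Definition betath (t u : R) : V3 :=
  vadd (vscal (- sin (th t u)) (Nor t u)) (vscal (cos (th t u)) (Bin t u)).

Definition psi1 (t u : R) : R := kappa t u * cos (th t u).
Definition psi2 (t u : R) : R := kappa t u * sin (th t u).
Definition psi3 (t u : R) : R := tors t u + ds th t u.

(** Fundamental forms of the trajectory surface in coordinates (u,t)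
    (index 1 = u, index 2 = t), with respect to the unit normal beta_theta. *)
Definition I11 t u := dot (duV gam t u) (duV gam t u).
Definition I12 t u := dot (duV gam t u) (dtV gam t u).
Definition I21 t u := dot (dtV gam t u) (duV gam t u).
Definition I22 t u := dot (dtV gam t u) (dtV gam t u).
Definition II11 t u := dot (duV (duV gam) t u) (betath t u).
Definition II12 t u := dot (duV (dtV gam) t u) (betath t u).
Definition II21 t u := dot (dtV (duV gam) t u) (betath t u).
Definition II22 t u := dot (dtV (dtV gam) t u) (betath t u).

Definition detI t u := I11 t u * I22 t u - I12 t u * I21 t u.
Definition detII t u := II11 t u * II22 t u - II12 t u * II21 t u.

Definition gaussK (t u : R) : R := detII t u / detI t u.
(* H = tr (II * I^{-1}), with I^{-1} = (1/det I) [[I22, -I12], [-I21, I11]] *)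
Definition meanH (t u : R) : R :=
  (II11 t u * I22 t u - II12 t u * I21 t u - II21 t u * I12 t u + II22 t u * I11 t u)
  / detI t u.

End Geom.

(** Along the flow, [∂_u γ = g T] and [∂_t γ = κ ν_θ] are orthogonal, so the first
    fundamental form of [Σ] is [diag (g², κ²)] and [β_θ] is a unit normal. In the frame
    [(T, ν_θ, β_θ)] the Frenet equations become [∂_s T = ψ1 ν_θ - ψ2 β_θ],
    [∂_s ν_θ = -ψ1 T + ψ3 β_θ], [∂_s β_θ = ψ2 T - ψ3 ν_θ], which give
    [II_uu = -g² ψ2] and [II_ut = II_tu = g κ ψ3]. For [II_tt = ∂_t² γ · β_θ] write
    [κ ν_θ = cos θ ∂_s T + sin θ T × ∂_s T], a smooth expression in [∂_u γ], [∂_u² γ] and [θ];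
    its time derivative involves [∂_t ∂_u γ] and [∂_t ∂_u² γ], which by Schwarz are [u]-derivatives
    of [κ ν_θ], and this yields [II_tt = κ² χ]. Then [H = II_uu / g² + II_tt / κ²] and
    [K = (II_uu II_tt - II_ut²) / (g² κ²)]. *)

From Stdlib Require Import Reals List ZArith Lra Psatz.
From Coquelicot Require Import Coquelicot.
Open Scope R_scope.

Lemma is_derive_Rplus (f g : R -> R) x df dg :
  is_derive f x df -> is_derive g x dg -> is_derive (fun y => f y + g y) x (df + dg).
Proof. exact (is_derive_plus f g x df dg). Qed.

Lemma is_derive_Ropp (f : R -> R) x df :
  is_derive f x df -> is_derive (fun y => - f y) x (- df).
Proof. exact (is_derive_opp f x df). Qed.

Lemma is_derive_Rminus (f g : R -> R) x df dg :
  is_derive f x df -> is_derive g x dg -> is_derive (fun y => f y - g y) x (df - dg).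
Proof. exact (is_derive_minus f g x df dg). Qed.

Lemma is_derive_Rmult (f g : R -> R) x df dg :
  is_derive f x df -> is_derive g x dg ->
  is_derive (fun y => f y * g y) x (df * g x + f x * dg).
Proof. intros Hf Hg; exact (is_derive_mult f g x df dg Hf Hg Rmult_comm). Qed.

Lemma is_derive_cos_comp (f : R -> R) x df :
  is_derive f x df -> is_derive (fun y => cos (f y)) x (- sin (f x) * df).
Proof.
  intros Hf; replace (- sin (f x) * df) with (scal df (- sin (f x))).
  - exact (is_derive_comp cos f x _ _ (is_derive_cos _) Hf).
  - unfold scal; simpl; unfold mult; simpl; ring.
Qed.

Lemma is_derive_sin_comp (f : R -> R) x df :
  is_derive f x df -> is_derive (fun y => sin (f y)) x (cos (f x) * df).
Proof.
  intros Hf; replace (cos (f x) * df) with (scal df (cos (f x))).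
  - exact (is_derive_comp sin f x _ _ (is_derive_sin _) Hf).
  - unfold scal; simpl; unfold mult; simpl; ring.
Qed.

Lemma is_derive_eq (f : R -> R) (x d1 d2 : R) : is_derive f x d1 -> d1 = d2 -> is_derive f x d2.
Proof. intros H <-; exact H. Qed.

Ltac derive_rules :=
  repeat match goal with
  | |- is_derive (fun y => _ + _) _ _ => apply is_derive_Rplus
  | |- is_derive (fun y => _ - _) _ _ => apply is_derive_Rminus
  | |- is_derive (fun y => - _) _ _ => apply is_derive_Ropp
  | |- is_derive (fun y => _ * _) _ _ => apply is_derive_Rmult
  end.

Lemma is_derive_locally_const (f : R -> R) x c d :
  locally x (fun y => f y = c) -> is_derive f x d -> d = 0.
Proof.
  intros Hc Hd; apply (is_derive_ext_loc f (fun _ => c)) in Hd; [|exact Hc].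
  rewrite <- (is_derive_unique _ _ _ Hd); apply Derive_const.
Qed.

Lemma is_derive_right_unique (f g : R -> R) x l1 l2 d : 0 < d ->
  is_derive f x l1 -> is_derive g x l2 -> (forall y, x <= y < x + d -> f y = g y) -> l1 = l2.
Proof.
  intros Hd H1 H2 E.
  pose proof (is_derive_Rminus f g x l1 l2 H1 H2) as H; apply is_derive_Reals in H.
  destruct (Req_dec (l1 - l2) 0) as [h|h]; [lra|].
  assert (Hp : 0 < Rabs (l1 - l2) / 2) by (apply Rabs_pos_lt in h; lra).
  destruct (H _ Hp) as [del Hdel].
  set (h0 := Rmin (del / 2) (d / 2)).
  assert (0 < h0) by (unfold h0; apply Rmin_pos; destruct del; simpl; lra).
  assert (h0 <= del / 2) by apply Rmin_l. assert (h0 <= d / 2) by apply Rmin_r.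
  assert (Hh0 : Rabs h0 < del) by (rewrite Rabs_pos_eq; destruct del; simpl in *; lra).
  specialize (Hdel h0 ltac:(lra) Hh0); rewrite (E (x + h0)), (E x) in Hdel by lra.
  replace ((g (x + h0) - g (x + h0) - (g x - g x)) / h0 - (l1 - l2))
    with (- (l1 - l2)) in Hdel by (field; lra).
  rewrite Rabs_Ropp in Hdel; apply Rabs_pos_lt in h; lra.
Qed.

Lemma V3_ext (a b : V3) : vx a = vx b -> vy a = vy b -> vz a = vz b -> a = b.
Proof. destruct a, b; simpl; intros; subst; reflexivity. Qed.

Definition vzero : V3 := mkV 0 0 0.

Ltac vunfold := unfold dot, cross, vadd, vscal, vzero in *; cbn [vx vy vz] in *.
Ltac vring := apply V3_ext; vunfold; ring.
Ltac vfield := apply V3_ext; vunfold; field.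

Definition vunit (a : V3) : V3 := vscal (/ vnorm a) a.

Lemma dot_comm a b : dot a b = dot b a. Proof. vunfold; ring. Qed.
Lemma dot_add_l a b c : dot (vadd a b) c = dot a c + dot b c. Proof. vunfold; ring. Qed.
Lemma dot_add_r a b c : dot c (vadd a b) = dot c a + dot c b. Proof. vunfold; ring. Qed.
Lemma dot_scal_l k a c : dot (vscal k a) c = k * dot a c. Proof. vunfold; ring. Qed.
Lemma dot_scal_r k a c : dot c (vscal k a) = k * dot c a. Proof. vunfold; ring. Qed.
Lemma dot_cross_l a b c : dot (cross a b) c = dot a (cross b c). Proof. vunfold; ring. Qed.
Lemma dot_cross_same_l a b : dot a (cross a b) = 0. Proof. vunfold; ring. Qed.
Lemma dot_cross_same_r a b : dot b (cross a b) = 0. Proof. vunfold; ring. Qed.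
Lemma cross_self a : cross a a = vzero. Proof. vring. Qed.
Lemma cross_anti a b : cross a b = vscal (-1) (cross b a). Proof. vring. Qed.
Lemma cross_scal_l k a b : cross (vscal k a) b = vscal k (cross a b). Proof. vring. Qed.
Lemma cross_scal_r k a b : cross a (vscal k b) = vscal k (cross a b). Proof. vring. Qed.
Lemma cross_add_l a b c : cross (vadd a b) c = vadd (cross a c) (cross b c). Proof. vring. Qed.
Lemma cross_add_r a b c : cross c (vadd a b) = vadd (cross c a) (cross c b). Proof. vring. Qed.
Lemma cross_cross a b c : cross a (cross b c) = vadd (vscal (dot a c) b) (vscal (- dot a b) c).
Proof. vring. Qed.
Lemma vscal_vzero k : vscal k vzero = vzero. Proof. vring. Qed.
Lemma vscal_1 a : vscal 1 a = a. Proof. vring. Qed.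

Lemma lagrange_identity a b : dot (cross a b) (cross a b) = dot a a * dot b b - dot a b ^ 2.
Proof. vunfold; ring. Qed.

Lemma triple_product_decomp a b c x : vscal (dot (cross a b) c) x =
  vadd (vscal (dot x a) (cross b c))
    (vadd (vscal (dot x b) (cross c a)) (vscal (dot x c) (cross a b))).
Proof. vring. Qed.

Lemma dot_self_ge0 a : 0 <= dot a a. Proof. vunfold; nra. Qed.

Lemma dot_self_eq0 a : dot a a = 0 -> a = vzero.
Proof.
  destruct a as [x y z]; vunfold; intros H.
  assert (x = 0) by nra; assert (y = 0) by nra; assert (z = 0) by nra; subst; reflexivity.
Qed.

Lemma vnorm_sq a : vnorm a * vnorm a = dot a a.
Proof. apply sqrt_sqrt, dot_self_ge0. Qed.

Lemma vnorm_pos a : 0 < vnorm a -> 0 < dot a a.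
Proof.
  unfold vnorm; intros H; destruct (Rle_dec (dot a a) 0) as [h|h]; [|lra].
  rewrite sqrt_neg_0 in H; lra.
Qed.

Lemma vnorm_vunit a : vscal (vnorm a) (vunit a) = a.
Proof.
  destruct (Req_dec (vnorm a) 0) as [h|h].
  - assert (Ha : dot a a = 0) by (rewrite <- vnorm_sq, h; ring).
    apply dot_self_eq0 in Ha; subst; unfold vunit; rewrite !vscal_vzero; reflexivity.
  - unfold vunit; vfield; exact h.
Qed.

Lemma dot_vunit_self a : 0 < dot a a -> dot (vunit a) (vunit a) = 1.
Proof.
  intros Ha; unfold vunit; rewrite dot_scal_l, dot_scal_r, <- vnorm_sq.
  assert (vnorm a <> 0) by (apply Rgt_not_eq, sqrt_lt_R0, Ha).
  field; assumption.
Qed.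

Ltac dot_expand := repeat rewrite ?dot_add_l, ?dot_add_r, ?dot_scal_l, ?dot_scal_r.

Ltac ring_sin2_cos2 x := match goal with |- ?L = ?R =>
  transitivity (R * (Rsqr (sin x) + Rsqr (cos x)));
  [unfold Rsqr; ring | rewrite sin2_cos2; ring] end.

Lemma cross_orthonormal_unit T N : dot T T = 1 -> dot N N = 1 -> dot T N = 0 ->
  dot (cross T N) (cross T N) = 1.
Proof. intros HTT HNN HTN; rewrite lagrange_identity, HTT, HNN, HTN; ring. Qed.

Lemma cross_N_cross_orthonormal T N : dot N N = 1 -> dot T N = 0 -> cross N (cross T N) = T.
Proof. intros HNN HTN; rewrite cross_cross, HNN, (dot_comm N T), HTN; vring. Qed.

Lemma cross_cross_orthonormal_T T N : dot T T = 1 -> dot T N = 0 -> cross (cross T N) T = N.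
Proof. intros HTT HTN; rewrite cross_anti, cross_cross, HTT, HTN; vring. Qed.

Lemma orthonormal_decomp T N x : dot T T = 1 -> dot N N = 1 -> dot T N = 0 -> x =
  vadd (vscal (dot x T) T) (vadd (vscal (dot x N) N) (vscal (dot x (cross T N)) (cross T N))).
Proof.
  intros HTT HNN HTN; pose proof (triple_product_decomp T N (cross T N) x) as H.
  rewrite cross_orthonormal_unit, cross_N_cross_orthonormal, cross_cross_orthonormal_T,
    vscal_1 in H by assumption.
  exact H.
Qed.

Definition is_vderive (F : R -> V3) (x : R) (D : V3) : Prop :=
  is_derive (fun y => vx (F y)) x (vx D) /\ is_derive (fun y => vy (F y)) x (vy D) /\
  is_derive (fun y => vz (F y)) x (vz D).

Definition vDerive (F : R -> V3) (x : R) : V3 :=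
  mkV (Derive (fun y => vx (F y)) x) (Derive (fun y => vy (F y)) x)
    (Derive (fun y => vz (F y)) x).

Lemma is_vderive_unique F x D : is_vderive F x D -> vDerive F x = D.
Proof. intros [h1 [h2 h3]]; apply V3_ext; simpl; now apply is_derive_unique. Qed.

Lemma is_vderive_eq F x D1 D2 : is_vderive F x D1 -> D1 = D2 -> is_vderive F x D2.
Proof. intros H <-; exact H. Qed.

Lemma is_vderive_ext_loc F G x D :
  locally x (fun y => F y = G y) -> is_vderive F x D -> is_vderive G x D.
Proof.
  intros E [h1 [h2 h3]]; split; [|split]; eapply is_derive_ext_loc; try eassumption;
    eapply filter_imp; try apply E; intros y Hy; simpl; now rewrite Hy.
Qed.

Lemma is_vderive_ext F G x D : (forall y, F y = G y) -> is_vderive F x D -> is_vderive G x D.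
Proof. intros E; apply is_vderive_ext_loc, filter_forall, E. Qed.

Lemma is_vderive_vadd F G x D E : is_vderive F x D -> is_vderive G x E ->
  is_vderive (fun y => vadd (F y) (G y)) x (vadd D E).
Proof.
  intros [h1 [h2 h3]] [k1 [k2 k3]]; split; [|split]; apply is_derive_Rplus; assumption.
Qed.

Lemma is_vderive_vscal f F x df D : is_derive f x df -> is_vderive F x D ->
  is_vderive (fun y => vscal (f y) (F y)) x (vadd (vscal df (F x)) (vscal (f x) D)).
Proof.
  intros hf [h1 [h2 h3]]; split; [|split]; apply is_derive_Rmult; assumption.
Qed.

Lemma is_vderive_cross F G x D E : is_vderive F x D -> is_vderive G x E ->
  is_vderive (fun y => cross (F y) (G y)) x (vadd (cross D (G x)) (cross (F x) E)).
Proof.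
  intros [h1 [h2 h3]] [k1 [k2 k3]]; split; [|split]; simpl;
    (eapply is_derive_eq; [derive_rules; eassumption|]); vunfold; ring.
Qed.

Lemma is_derive_dot F G x D E : is_vderive F x D -> is_vderive G x E ->
  is_derive (fun y => dot (F y) (G y)) x (dot D (G x) + dot (F x) E).
Proof.
  intros [h1 [h2 h3]] [k1 [k2 k3]]; unfold dot.
  eapply is_derive_eq; [derive_rules; eassumption|]; vunfold; ring.
Qed.

Lemma is_vderive_right_unique (F G : R -> V3) x D1 D2 d : 0 < d ->
  is_vderive F x D1 -> is_vderive G x D2 -> (forall y, x <= y < x + d -> F y = G y) -> D1 = D2.
Proof.
  intros Hd [a1 [a2 a3]] [b1 [b2 b3]] E; apply V3_ext;
    eapply is_derive_right_unique; eauto; intros y Hy; simpl; rewrite E; auto.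
Qed.

Lemma is_vderive_vunit F x D : is_vderive F x D -> 0 < dot (F x) (F x) ->
  is_vderive (fun y => vunit (F y)) x
    (vscal (/ vnorm (F x)) (vadd D (vscal (- dot D (vunit (F x))) (vunit (F x))))).
Proof.
  intros HD Hpos.
  assert (Hn : vnorm (F x) <> 0) by (apply Rgt_not_eq, sqrt_lt_R0, Hpos).
  eapply is_vderive_eq.
  - apply (is_vderive_vscal (fun y => / vnorm (F y))); [|exact HD].
    apply (is_derive_inv (fun y => vnorm (F y))); [|exact Hn].
    apply (is_derive_sqrt (fun y => dot (F y) (F y))); [|exact Hpos].
    apply is_derive_dot; exact HD.
  - unfold vunit; rewrite dot_scal_r; fold (vnorm (F x)).
    rewrite (dot_comm (F x) D); vfield; exact Hn.
Qed.

(** * Functions of class C^k on an open set *)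

Fixpoint Ck (n : nat) (U : R -> Prop) (f : R -> R) : Prop :=
  match n with
  | O => True
  | S m => (forall x, U x -> ex_derive f x) /\ Ck m U (Derive f)
  end.

Lemma Ck_S_Ck n U f : Ck (S n) U f -> Ck n U f.
Proof.
  revert f; induction n as [|n IH]; intros f; simpl; auto.
  intros [H1 H2]; split; auto.
Qed.

Lemma Ck_sub n (U V : R -> Prop) f : (forall x, V x -> U x) -> Ck n U f -> Ck n V f.
Proof. revert f; induction n; simpl; auto; intros f HVU [H1 H2]; split; auto. Qed.

Section CkOpen.
Variable U : R -> Prop.
Hypothesis HU : open U.

Lemma Ck_ext n f g : (forall x, U x -> f x = g x) -> Ck n U f -> Ck n U g.
Proof.
  revert f g; induction n as [|n IH]; simpl; auto; intros f g E [H1 H2].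
  assert (Hloc : forall x, U x -> locally x (fun y => f y = g y))
    by (intros x Hx; eapply filter_imp; [|exact (HU x Hx)]; auto).
  split.
  - intros x Hx; apply (ex_derive_ext_loc f); auto.
  - apply (IH (Derive f)); auto; intros x Hx; apply Derive_ext_loc; auto.
Qed.

Lemma Ck_const n c : Ck n U (fun _ => c).
Proof.
  revert c; induction n; simpl; auto; intros c; split.
  - intros; apply ex_derive_const.
  - apply (Ck_ext n (fun _ => 0)); auto; intros; rewrite Derive_const; auto.
Qed.

Lemma Ck_plus n f g : Ck n U f -> Ck n U g -> Ck n U (fun x => f x + g x).
Proof.
  revert f g; induction n; simpl; auto; intros f g [F1 F2] [G1 G2]; split.
  - intros x Hx; apply (ex_derive_plus f g); auto.
  - apply (Ck_ext n (fun x => Derive f x + Derive g x)); auto.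
    intros x Hx; rewrite (Derive_plus f g); auto.
Qed.

Lemma Ck_opp n f : Ck n U f -> Ck n U (fun x => - f x).
Proof.
  revert f; induction n; simpl; auto; intros f [F1 F2]; split.
  - intros x Hx; apply (ex_derive_opp f); auto.
  - apply (Ck_ext n (fun x => - Derive f x)); auto.
    intros x Hx; rewrite (Derive_opp f); auto.
Qed.

Lemma Ck_minus n f g : Ck n U f -> Ck n U g -> Ck n U (fun x => f x - g x).
Proof. intros; apply (Ck_plus n f (fun x => - g x)); auto; apply Ck_opp; auto. Qed.

Lemma Ck_mult n f g : Ck n U f -> Ck n U g -> Ck n U (fun x => f x * g x).
Proof.
  revert f g; induction n as [|n IH]; simpl; auto; intros f g HF HG.
  pose proof (Ck_S_Ck n U f HF) as HF'; pose proof (Ck_S_Ck n U g HG) as HG'.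
  destruct HF as [F1 F2], HG as [G1 G2]; split.
  - intros x Hx; apply (ex_derive_mult f g); auto.
  - apply (Ck_ext n (fun x => Derive f x * g x + f x * Derive g x)).
    + intros x Hx; rewrite (Derive_mult f g); auto.
    + apply Ck_plus; apply IH; auto.
Qed.

Lemma Ck_comp n (V : R -> Prop) phi f : Ck n V phi -> Ck n U f ->
  (forall x, U x -> V (f x)) -> Ck n U (fun x => phi (f x)).
Proof.
  revert phi f; induction n as [|n IH]; simpl; auto; intros phi f HP HF HUV.
  pose proof (Ck_S_Ck n U f HF) as HF'.
  destruct HP as [P1 P2], HF as [F1 F2]; split.
  - intros x Hx; apply (ex_derive_comp phi f); auto.
  - apply (Ck_ext n (fun x => Derive phi (f x) * Derive f x)).
    + intros x Hx; rewrite (Derive_comp phi f); auto; ring.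
    + apply Ck_mult; auto; apply (IH V); auto.
Qed.

End CkOpen.

Lemma Ck_Rinv n : Ck n (fun x => x <> 0) Rinv.
Proof.
  induction n; simpl; auto; split.
  - intros x Hx; apply (ex_derive_inv (fun x => x)); auto; apply ex_derive_id.
  - apply (Ck_ext _ (open_neq 0) n (fun x => - (/ x * / x))).
    + intros x Hx; rewrite (Derive_inv (fun x => x)), Derive_id; auto.
      * field; auto.
      * apply ex_derive_id.
    + apply Ck_opp, Ck_mult; auto; apply open_neq.
Qed.

Lemma Ck_sqrt_pos n : Ck n (fun x => 0 < x) sqrt.
Proof.
  assert (Hd : forall x, 0 < x -> is_derive sqrt x (/ 2 * / sqrt x)).
  { intros x Hx; eapply is_derive_eq.
    - exact (is_derive_sqrt (fun x => x) x 1 (is_derive_id (K:=R_AbsRing) x) Hx).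
    - cbv beta; field; apply Rgt_not_eq, sqrt_lt_R0, Hx. }
  induction n; simpl; auto; split.
  - intros x Hx; eexists; exact (Hd x Hx).
  - apply (Ck_ext _ (open_gt 0) n (fun x => / 2 * / sqrt x)).
    + intros x Hx; symmetry; apply is_derive_unique, Hd, Hx.
    + apply Ck_mult; [apply open_gt | apply Ck_const, open_gt |].
      apply (Ck_comp _ (open_gt 0) n (fun x => x <> 0)); [apply Ck_Rinv | exact IHn |].
      intros x Hx; apply Rgt_not_eq, sqrt_lt_R0, Hx.
Qed.

Section CkVector.
Variable U : R -> Prop.
Hypothesis HU : open U.

Lemma Ck_inv n f : Ck n U f -> (forall x, U x -> f x <> 0) -> Ck n U (fun x => / f x).
Proof. intros; apply (Ck_comp U HU n (fun x => x <> 0)); auto; apply Ck_Rinv. Qed.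

Lemma Ck_sqrt n f : Ck n U f -> (forall x, U x -> 0 < f x) -> Ck n U (fun x => sqrt (f x)).
Proof. intros; apply (Ck_comp U HU n (fun x => 0 < x)); auto; apply Ck_sqrt_pos. Qed.

Definition CkV n (F : R -> V3) : Prop :=
  Ck n U (fun y => vx (F y)) /\ Ck n U (fun y => vy (F y)) /\ Ck n U (fun y => vz (F y)).

Lemma CkV_vDerive n F : CkV (S n) F -> CkV n (vDerive F).
Proof. intros [[_ A] [[_ B] [_ C]]]; repeat split; auto. Qed.

Lemma CkV_is_vderive n F x : CkV (S n) F -> U x -> is_vderive F x (vDerive F x).
Proof.
  intros [[A _] [[B _] [C _]]] Hx; split; [|split]; simpl; apply Derive_correct; auto.
Qed.

Lemma CkV_vscal n f F : Ck n U f -> CkV n F -> CkV n (fun y => vscal (f y) (F y)).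
Proof. intros H [A [B C]]; repeat split; simpl; apply Ck_mult; auto. Qed.

Lemma Ck_dot n F G : CkV n F -> CkV n G -> Ck n U (fun y => dot (F y) (G y)).
Proof.
  intros [A [B C]] [A' [B' C']]; unfold dot; repeat apply Ck_plus; auto; apply Ck_mult; auto.
Qed.

Lemma CkV_cross n F G : CkV n F -> CkV n G -> CkV n (fun y => cross (F y) (G y)).
Proof.
  intros [A [B C]] [A' [B' C']]; repeat split; simpl; apply Ck_minus; auto; apply Ck_mult; auto.
Qed.

End CkVector.

Lemma CkV_sub n (U V : R -> Prop) F : (forall x, V x -> U x) -> CkV U n F -> CkV V n F.
Proof. intros H [A [B C]]; repeat split; eapply Ck_sub; eauto. Qed.

(** * The Frenet frame of a regular curve *)

Definition regular_curve (gam : R -> R -> V3) (t : R) : Prop :=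
  (forall n, CkV (fun _ => True) n (fun u => duV gam t u)) /\ (forall u, 0 < speed gam t u).

Definition curvature_vector (P Q : V3) : V3 :=
  vscal (/ vnorm P ^ 2) (vadd Q (vscal (- dot Q (vunit P)) (vunit P))).

Lemma kappa_Nor gam t u : dsV gam (Tan gam) t u = vscal (kappa gam t u) (Nor gam t u).
Proof. symmetry; apply vnorm_vunit. Qed.

Lemma kappa_nuth gam th t u :
  vscal (kappa gam t u) (nuth gam th t u) =
  vadd (vscal (cos (th t u)) (dsV gam (Tan gam) t u))
    (vscal (sin (th t u)) (cross (Tan gam t u) (dsV gam (Tan gam) t u))).
Proof. rewrite kappa_Nor; unfold nuth, Bin; rewrite cross_scal_r; vring. Qed.

Lemma duV_speed_Tan gam t u : duV gam t u = vscal (speed gam t u) (Tan gam t u).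
Proof. symmetry; apply vnorm_vunit. Qed.

Lemma Nor_unit gam t u : 0 < kappa gam t u -> dot (Nor gam t u) (Nor gam t u) = 1.
Proof. intros Hu; apply dot_vunit_self, vnorm_pos, Hu. Qed.

Lemma Tan_Bin_orth gam t u : dot (Tan gam t u) (Bin gam t u) = 0.
Proof. apply dot_cross_same_l. Qed.

Lemma Nor_Bin_orth gam t u : dot (Nor gam t u) (Bin gam t u) = 0.
Proof. apply dot_cross_same_r. Qed.

Section FrenetFrame.
Context {gam : R -> R -> V3} {t : R}.
Hypothesis Hreg : regular_curve gam t.

Local Notation P := (duV gam t).
Local Notation Q := (duV (duV gam) t).
Local Notation g := (speed gam t).
Local Notation Tn := (Tan gam t).
Local Notation Kv := (dsV gam (Tan gam) t).
Local Notation ka := (kappa gam t).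
Local Notation Nn := (Nor gam t).
Local Notation Bn := (Bin gam t).
Local Notation curved := (fun u => 0 < kappa gam t u).

Lemma speed_neq0 u : g u <> 0.
Proof. apply Rgt_not_eq, (proj2 Hreg). Qed.

Lemma dot_duV_pos u : 0 < dot (P u) (P u).
Proof. apply vnorm_pos, (proj2 Hreg). Qed.

Lemma Tan_unit u : dot (Tn u) (Tn u) = 1.
Proof. apply dot_vunit_self, dot_duV_pos. Qed.

Lemma is_vderive_duV u : is_vderive P u (Q u).
Proof. exact (CkV_is_vderive _ 0 _ u (proj1 Hreg 1%nat) I). Qed.

Lemma is_derive_speed u : is_derive g u (dot (Q u) (Tn u)).
Proof.
  eapply is_derive_eq.
  - apply (is_derive_sqrt (fun u => dot (P u) (P u))); [|apply dot_duV_pos].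
    apply is_derive_dot; apply is_vderive_duV.
  - fold (vnorm (P u)); change (vnorm (P u)) with (g u).
    unfold Tan, dsV; rewrite dot_scal_r, (dot_comm (P u)); field; apply speed_neq0.
Qed.

Lemma is_vderive_Tan_u u :
  is_vderive Tn u (vscal (/ g u) (vadd (Q u) (vscal (- dot (Q u) (Tn u)) (Tn u)))).
Proof. exact (is_vderive_vunit P u _ (is_vderive_duV u) (dot_duV_pos u)). Qed.

Lemma curvature_vector_eq u : Kv u = curvature_vector (P u) (Q u).
Proof.
  unfold dsV, curvature_vector; change (duV (Tan gam) t u) with (vDerive Tn u).
  rewrite (is_vderive_unique _ _ _ (is_vderive_Tan_u u)).
  change (vnorm (P u)) with (g u); change (vunit (P u)) with (Tn u).
  pose proof (speed_neq0 u); vfield; assumption.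
Qed.

Lemma is_vderive_Tan u : is_vderive Tn u (vscal (g u) (Kv u)).
Proof.
  eapply is_vderive_eq; [apply is_vderive_Tan_u|].
  unfold dsV; change (duV (Tan gam) t u) with (vDerive Tn u).
  rewrite (is_vderive_unique _ _ _ (is_vderive_Tan_u u)).
  pose proof (speed_neq0 u); vfield; assumption.
Qed.

Lemma Tan_curvature_orth u : dot (Tn u) (Kv u) = 0.
Proof.
  rewrite curvature_vector_eq; unfold curvature_vector; change (vunit (P u)) with (Tn u).
  dot_expand; rewrite Tan_unit, (dot_comm (Tn u)); ring.
Qed.

Lemma duV_duV_decomp u : Q u = vadd (vscal (dot (Q u) (Tn u)) (Tn u)) (vscal (g u ^ 2) (Kv u)).
Proof.
  rewrite curvature_vector_eq; unfold curvature_vector.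
  change (vunit (P u)) with (Tn u); change (vnorm (P u)) with (g u).
  pose proof (speed_neq0 u); vfield; assumption.
Qed.

Lemma Ck_speed n : Ck n (fun _ => True) g.
Proof.
  apply (Ck_sqrt _ open_true n (fun u => dot (P u) (P u))).
  - apply (Ck_dot _ open_true); apply (proj1 Hreg).
  - intros; apply dot_duV_pos.
Qed.

Lemma CkV_Tan n : CkV (fun _ => True) n Tn.
Proof.
  apply (CkV_vscal _ open_true n (fun u => / g u) P); [|apply (proj1 Hreg)].
  apply Ck_inv; [apply open_true | apply Ck_speed | intros; apply speed_neq0].
Qed.

Lemma CkV_curvature_vector n : CkV (fun _ => True) n Kv.
Proof.
  apply (CkV_vscal _ open_true n (fun u => / g u) (vDerive Tn)).
  - apply Ck_inv; [apply open_true | apply Ck_speed | intros; apply speed_neq0].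
  - apply CkV_vDerive, CkV_Tan.
Qed.

Lemma open_curved : open curved.
Proof.
  apply (open_comp ka (fun x => 0 < x)); [|apply open_gt].
  intros u _; apply continuous_sqrt_comp, (ex_derive_continuous (K:=R_AbsRing) (V:=R_NormedModule)).
  eexists; apply is_derive_dot; apply (CkV_is_vderive _ 0 _ u (CkV_curvature_vector 1%nat) I).
Qed.

Lemma Ck_curvature n : Ck n curved ka.
Proof.
  apply (Ck_sqrt _ open_curved n (fun u => dot (Kv u) (Kv u))).
  - apply (Ck_dot _ open_curved); apply (CkV_sub n (fun _ => True)); auto;
      apply CkV_curvature_vector.
  - intros u Hu; apply vnorm_pos, Hu.
Qed.

Lemma CkV_Nor n : CkV curved n Nn.
Proof.
  apply (CkV_vscal _ open_curved n (fun u => / ka u) Kv).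
  - apply Ck_inv; [apply open_curved | apply Ck_curvature | intros u Hu; apply Rgt_not_eq, Hu].
  - apply (CkV_sub n (fun _ => True)); auto; apply CkV_curvature_vector.
Qed.

Lemma CkV_Bin n : CkV curved n Bn.
Proof.
  apply (CkV_cross _ open_curved n Tn Nn); [|apply CkV_Nor].
  apply (CkV_sub n (fun _ => True)); auto; apply CkV_Tan.
Qed.

Lemma Ck_torsion n : Ck n curved (tors gam t).
Proof.
  apply (Ck_dot _ open_curved n (fun u => dsV gam (Nor gam) t u) Bn); [|apply CkV_Bin].
  apply (CkV_vscal _ open_curved n (fun u => / g u) (vDerive Nn)).
  - apply Ck_inv; [apply open_curved | | intros; apply speed_neq0].
    apply (Ck_sub n (fun _ => True)); auto; apply Ck_speed.
  - apply CkV_vDerive, CkV_Nor.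
Qed.

Lemma Tan_Nor_orth u : dot (Tn u) (Nn u) = 0.
Proof. unfold Nor, vunit; rewrite dot_scal_r, Tan_curvature_orth; ring. Qed.

Lemma duV_duV_Bin_orth u : dot (Q u) (Bn u) = 0.
Proof.
  rewrite duV_duV_decomp, kappa_Nor; dot_expand; rewrite Tan_Bin_orth, Nor_Bin_orth; ring.
Qed.

Lemma Bin_unit u : 0 < ka u -> dot (Bn u) (Bn u) = 1.
Proof. intros Hu; apply cross_orthonormal_unit; auto using Tan_unit, Nor_unit, Tan_Nor_orth. Qed.

Lemma frenet_Nor u : 0 < ka u ->
  is_vderive Nn u (vadd (vscal (- g u * ka u) (Tn u)) (vscal (g u * tors gam t u) (Bn u))).
Proof.
  intros Hu.
  assert (HD : is_vderive Nn u (vDerive Nn u)) by exact (CkV_is_vderive _ 0 _ u (CkV_Nor 1%nat) Hu).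
  eapply is_vderive_eq; [exact HD|].
  assert (EN : dot (vDerive Nn u) (Nn u) = 0).
  { pose proof (is_derive_dot _ _ u _ _ HD HD) as H.
    apply (is_derive_locally_const _ u 1) in H; [rewrite (dot_comm (Nn u)) in H; lra|].
    eapply filter_imp; [|exact (open_curved u Hu)]; apply Nor_unit. }
  assert (ET : dot (vDerive Nn u) (Tn u) = - g u * ka u).
  { pose proof (is_derive_dot _ _ u _ _ (is_vderive_Tan u) HD) as H.
    apply (is_derive_locally_const _ u 0) in H; [|apply filter_forall, Tan_Nor_orth].
    rewrite dot_scal_l, kappa_Nor, dot_scal_l, Nor_unit, dot_comm in H by exact Hu; lra. }
  assert (EB : dot (vDerive Nn u) (Bn u) = g u * tors gam t u).
  { unfold tors, dsV; change (duV (Nor gam) t u) with (vDerive Nn u).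
    rewrite dot_scal_l; field; apply speed_neq0. }
  rewrite (orthonormal_decomp (Tn u) (Nn u) (vDerive Nn u)
    (Tan_unit u) (Nor_unit gam t u Hu) (Tan_Nor_orth u)) at 1.
  change (cross (Tn u) (Nn u)) with (Bn u); rewrite EN, ET, EB; vring.
Qed.

Lemma frenet_Bin u : 0 < ka u -> is_vderive Bn u (vscal (- g u * tors gam t u) (Nn u)).
Proof.
  intros Hu; eapply is_vderive_eq.
  - apply is_vderive_cross; [apply is_vderive_Tan | apply frenet_Nor, Hu].
  - rewrite kappa_Nor; unfold Bin.
    rewrite !cross_add_r, !cross_scal_l, !cross_scal_r, !cross_self, cross_cross,
      Tan_unit, Tan_Nor_orth.
    vring.
Qed.

Lemma frenet_nuth (th : R -> R -> R) u : 0 < ka u -> ex_derive (fun u => th t u) u ->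
  is_vderive (fun u => nuth gam th t u) u
    (vscal (g u) (vadd (vscal (- psi1 gam th t u) (Tn u))
                       (vscal (psi3 gam th t u) (betath gam th t u)))).
Proof.
  intros Hu [dth Hth]; eapply is_vderive_eq.
  - apply is_vderive_vadd; apply is_vderive_vscal.
    + apply is_derive_cos_comp, Hth.
    + apply frenet_Nor, Hu.
    + apply is_derive_sin_comp, Hth.
    + apply frenet_Bin, Hu.
  - unfold betath, psi1, psi3, ds; rewrite (is_derive_unique _ _ _ Hth : du th t u = dth).
    pose proof (speed_neq0 u); vfield; assumption.
Qed.

Lemma frenet_betath (th : R -> R -> R) u : 0 < ka u -> ex_derive (fun u => th t u) u ->
  is_vderive (fun u => betath gam th t u) u
    (vscal (g u) (vadd (vscal (psi2 gam th t u) (Tn u))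
                       (vscal (- psi3 gam th t u) (nuth gam th t u)))).
Proof.
  intros Hu [dth Hth]; eapply is_vderive_eq.
  - apply is_vderive_vadd; apply is_vderive_vscal.
    + apply is_derive_Ropp, is_derive_sin_comp, Hth.
    + apply frenet_Nor, Hu.
    + apply is_derive_cos_comp, Hth.
    + apply frenet_Bin, Hu.
  - unfold nuth, psi2, psi3, ds; rewrite (is_derive_unique _ _ _ Hth : du th t u = dth).
    pose proof (speed_neq0 u); vfield; assumption.
Qed.

End FrenetFrame.

Lemma smooth_on_Ck_u (P : R -> Prop) f t : smooth_on P f -> P t ->
  forall n w, Ck n (fun _ => True) (fun u => pder w f t u).
Proof.
  intros Hs Ht n; induction n as [|n IH]; simpl; auto; intros w; split.
  - intros x _; apply (Hs w t x Ht).
  - exact (IH (false :: w)).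
Qed.

Section Strip.
Variables (a : R) (tbar : Rbar).
Local Notation strip := (fun t => a < t /\ Rbar_lt t tbar).

Lemma strip_locally t : strip t -> exists d : posreal, forall s, Rabs (s - t) < d -> strip s.
Proof.
  intros [H1 H2]; destruct tbar as [b| |]; simpl in H2; [| |contradiction].
  - assert (Hd : 0 < Rmin (t - a) (b - t)) by (apply Rmin_pos; lra).
    exists (mkposreal _ Hd); intros s Hs; simpl in Hs; apply Rabs_def2 in Hs.
    pose proof (Rmin_l (t - a) (b - t)); pose proof (Rmin_r (t - a) (b - t)); simpl; lra.
  - assert (Hd : 0 < t - a) by lra.
    exists (mkposreal _ Hd); intros s Hs; simpl in Hs; apply Rabs_def2 in Hs.
    simpl; split; auto; lra.
Qed.

Lemma schwarz_pder f w t u : smooth_on strip f -> strip t ->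
  dt (du (pder w f)) t u = du (dt (pder w f)) t u.
Proof.
  intros Hs Ht; destruct (strip_locally t Ht) as [d Hd]; unfold dt, du.
  apply (Schwarz (pder w f) t u).
  - exists d; intros t' u' H1 _; pose proof (Hd t' H1) as Ht'.
    repeat split; [apply (Hs w t' u' Ht') | apply (Hs w t' u' Ht')
                  | apply (Hs (false :: w) t' u' Ht') | apply (Hs (true :: w) t' u' Ht')].
  - apply continuity_2d_pt_filterlim, (Hs (true :: false :: w) t u Ht).
  - apply continuity_2d_pt_filterlim, (Hs (false :: true :: w) t u Ht).
Qed.

Lemma schwarz_pder2 f w t u : smooth_on strip f -> strip t ->
  dt (du (du (pder w f))) t u = du (du (dt (pder w f))) t u.
Proof.
  intros Hs Ht; change (du (pder w f)) with (pder (false :: w) f).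
  rewrite (schwarz_pder f (false :: w) t u Hs Ht); simpl.
  unfold du at 1 3; apply Derive_ext; intros u'; apply (schwarz_pder f w t u' Hs Ht).
Qed.

Definition pderV (w : list bool) (F : R -> R -> V3) (t u : R) : V3 :=
  mkV (pder w (fun t u => vx (F t u)) t u) (pder w (fun t u => vy (F t u)) t u)
    (pder w (fun t u => vz (F t u)) t u).

Lemma smoothV_is_vderive_t w F t u : smoothV_on strip F -> strip t ->
  is_vderive (fun t => pderV w F t u) t (pderV (true :: w) F t u).
Proof.
  intros [H1 [H2 H3]] Ht; split; [|split]; apply Derive_correct;
    [apply (H1 w t u Ht) | apply (H2 w t u Ht) | apply (H3 w t u Ht)].
Qed.

End Strip.

(** * The fundamental forms of the trajectory surface *)

Definition framed_chi (gam : R -> R -> V3) (th ups : R -> R -> R) (t u : R) : R :=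
  let k := kappa gam t u in
  let p3 := psi3 gam th t u in
  ups t u / k
  + (k * ds gam (psi3 gam th) t u + 2 * ds gam (kappa gam) t u * p3) / k ^ 3 * psi1 gam th t u
  + (ds gam (ds gam (kappa gam)) t u - k * p3 ^ 2) / k ^ 3 * psi2 gam th t u.

Section TrajectorySurface.
Variables (a : R) (tbar : Rbar) (gam : R -> R -> V3) (th ups : R -> R -> R).
Local Notation strip := (fun t => a < t /\ Rbar_lt t tbar).
Hypothesis Hgam : smoothV_on strip gam.
Hypothesis Hth : C12_on strip th.
Hypothesis Hspeed : forall t u, a < t -> Rbar_lt t tbar -> speed gam t u > 0.
Hypothesis Hflow : forall t u, 0 <= t -> Rbar_lt t tbar ->
  dtV gam t u = vscal (kappa gam t u) (nuth gam th t u).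
Hypothesis Hups : forall t u, 0 <= t -> Rbar_lt t tbar -> dt th t u = ups t u.
Variables t0 u0 : R.
Hypotheses (Ha : a < 0) (Ht0 : 0 <= t0) (Ht0b : Rbar_lt t0 tbar) (Hk0 : 0 < kappa gam t0 u0).

Local Notation g := (speed gam t0).
Local Notation ka := (kappa gam t0).
Local Notation Tn := (Tan gam t0).
Local Notation Nn := (Nor gam t0).
Local Notation Bn := (Bin gam t0).
Local Notation nu := (nuth gam th t0).
Local Notation be := (betath gam th t0).
Local Notation Pt := (dtV (duV gam) t0 u0).
Local Notation Qt := (dtV (duV (duV gam)) t0 u0).

Lemma regular_in_strip t : strip t -> regular_curve gam t.
Proof.
  intros Ht; pose proof Hgam as [H1 [H2 H3]]; split.
  - intros n; split; [|split];
      [exact (smooth_on_Ck_u _ _ t H1 Ht n (false :: nil))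
      | exact (smooth_on_Ck_u _ _ t H2 Ht n (false :: nil))
      | exact (smooth_on_Ck_u _ _ t H3 Ht n (false :: nil))].
  - intros u; apply Hspeed; apply Ht.
Qed.

Lemma strip_t0 : strip t0.
Proof. split; [lra | exact Ht0b]. Qed.

Let reg0 : regular_curve gam t0 := regular_in_strip t0 strip_t0.

Local Ltac frame_simpl :=
  unfold nuth, betath; dot_expand;
  repeat first
    [ rewrite (Tan_unit reg0) | rewrite (Nor_unit gam t0 u0 Hk0) | rewrite (Bin_unit reg0 u0 Hk0)
    | rewrite (Tan_Nor_orth reg0) | rewrite Tan_Bin_orth | rewrite Nor_Bin_orth
    | rewrite (dot_comm (Nor gam t0 _) (Tan gam t0 _))
    | rewrite (dot_comm (Bin gam t0 _) (Tan gam t0 _))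
    | rewrite (dot_comm (Bin gam t0 _) (Nor gam t0 _)) ].

Lemma ex_derive_th_u u : ex_derive (fun u => th t0 u) u.
Proof. apply (Hth t0 u strip_t0). Qed.

Lemma is_derive_du_th u : is_derive (fun u => du th t0 u) u (du (du th) t0 u).
Proof. apply Derive_correct, (Hth t0 u strip_t0). Qed.

Lemma is_derive_curvature_u u : 0 < ka u -> is_derive ka u (du (kappa gam) t0 u).
Proof. intros Hu; apply Derive_correct; exact (proj1 (Ck_curvature reg0 1%nat) u Hu). Qed.

Lemma is_derive_du_curvature :
  is_derive (fun u => du (kappa gam) t0 u) u0 (du (du (kappa gam)) t0 u0).
Proof. apply Derive_correct; exact (proj1 (proj2 (Ck_curvature reg0 2%nat)) u0 Hk0). Qed.

Lemma is_derive_speed_u u : is_derive g u (du (speed gam) t0 u).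
Proof. apply Derive_correct; exact (proj1 (Ck_speed reg0 1%nat) u I). Qed.

Lemma du_speed u : du (speed gam) t0 u = dot (duV (duV gam) t0 u) (Tn u).
Proof. apply is_derive_unique, (is_derive_speed reg0). Qed.

Lemma is_derive_psi1_u : is_derive (fun u => psi1 gam th t0 u) u0 (du (psi1 gam th) t0 u0).
Proof.
  apply Derive_correct; eexists; apply is_derive_Rmult.
  - apply is_derive_curvature_u, Hk0.
  - apply is_derive_cos_comp, Derive_correct, ex_derive_th_u.
Qed.

Lemma is_derive_psi3_u : is_derive (fun u => psi3 gam th t0 u) u0 (du (psi3 gam th) t0 u0).
Proof.
  apply Derive_correct; eexists; apply is_derive_Rplus.
  - apply Derive_correct; exact (proj1 (Ck_torsion reg0 1%nat) u0 Hk0).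
  - apply is_derive_Rmult; [apply is_derive_du_th|].
    apply is_derive_inv; [apply is_derive_speed_u | apply (speed_neq0 reg0)].
Qed.

Let flow_velocity_du u := vadd (vscal (du (kappa gam) t0 u) (nu u))
  (vscal (ka u * g u) (vadd (vscal (- psi1 gam th t0 u) (Tn u)) (vscal (psi3 gam th t0 u) (be u)))).

Lemma is_vderive_dtV_u u : 0 < ka u ->
  is_vderive (fun u => dtV gam t0 u) u (flow_velocity_du u).
Proof.
  intros Hu; apply (is_vderive_ext (fun u => vscal (ka u) (nu u))).
  { intros; symmetry; apply Hflow; assumption. }
  eapply is_vderive_eq.
  - apply is_vderive_vscal; [apply is_derive_curvature_u, Hu|].
    apply (frenet_nuth reg0); [exact Hu | apply ex_derive_th_u].
  - unfold flow_velocity_du; vring.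
Qed.

Lemma dtV_duV_gam : Pt = flow_velocity_du u0.
Proof.
  pose proof Hgam as [H1 [H2 H3]]; transitivity (duV (dtV gam) t0 u0).
  - apply V3_ext; apply (schwarz_pder a tbar _ nil); assumption || exact strip_t0.
  - change (duV (dtV gam) t0 u0) with (vDerive (fun u => dtV gam t0 u) u0).
    apply is_vderive_unique, is_vderive_dtV_u, Hk0.
Qed.

Lemma dtV_duV_duV_gam D : is_vderive flow_velocity_du u0 D -> Qt = D.
Proof.
  intros HD; pose proof Hgam as [H1 [H2 H3]]; transitivity (duV (duV (dtV gam)) t0 u0).
  - apply V3_ext; apply (schwarz_pder2 a tbar _ nil); assumption || exact strip_t0.
  - change (duV (duV (dtV gam)) t0 u0) with (vDerive (fun u => duV (dtV gam) t0 u) u0).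
    apply is_vderive_unique; eapply is_vderive_ext_loc; [|exact HD].
    eapply filter_imp; [|exact (open_curved reg0 u0 Hk0)]; intros u Hu.
    change (duV (dtV gam) t0 u) with (vDerive (fun u => dtV gam t0 u) u).
    symmetry; apply is_vderive_unique, is_vderive_dtV_u, Hu.
Qed.

Lemma flow_velocity_du_betath :
  dot (flow_velocity_du u0) (be u0) = g u0 * ka u0 * psi3 gam th t0 u0.
Proof. unfold flow_velocity_du; frame_simpl; ring_sin2_cos2 (th t0 u0). Qed.

Lemma flow_velocity_du_Bin : dot (flow_velocity_du u0) (Bn u0) =
  du (kappa gam) t0 u0 * sin (th t0 u0) + g u0 * ka u0 * psi3 gam th t0 u0 * cos (th t0 u0).
Proof. unfold flow_velocity_du; frame_simpl; ring. Qed.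

Lemma is_vderive_flow_velocity_du : exists D, is_vderive flow_velocity_du u0 D /\
  dot D (Bn u0) = du (du (kappa gam)) t0 u0 * sin (th t0 u0)
    + (2 * g u0 * du (kappa gam) t0 u0 + ka u0 * du (speed gam) t0 u0)
      * psi3 gam th t0 u0 * cos (th t0 u0)
    + g u0 * ka u0 * du (psi3 gam th) t0 u0 * cos (th t0 u0)
    - ka u0 * (g u0 * psi3 gam th t0 u0) ^ 2 * sin (th t0 u0).
Proof.
  eexists; split.
  - unfold flow_velocity_du; apply is_vderive_vadd; apply is_vderive_vscal.
    + apply is_derive_du_curvature.
    + apply (frenet_nuth reg0); [exact Hk0 | apply ex_derive_th_u].
    + apply is_derive_Rmult; [apply is_derive_curvature_u, Hk0 | apply is_derive_speed_u].
    + apply is_vderive_vadd; apply is_vderive_vscal.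
      * apply is_derive_Ropp, is_derive_psi1_u.
      * apply (is_vderive_Tan reg0).
      * apply is_derive_psi3_u.
      * apply (frenet_betath reg0); [exact Hk0 | apply ex_derive_th_u].
  - rewrite kappa_Nor; frame_simpl; ring.
Qed.

Lemma I11_eq : I11 gam t0 u0 = g u0 ^ 2.
Proof. unfold I11; rewrite duV_speed_Tan; dot_expand; rewrite (Tan_unit reg0); ring. Qed.

Lemma I12_eq : I12 gam t0 u0 = 0.
Proof. unfold I12; rewrite Hflow, duV_speed_Tan by assumption; frame_simpl; ring. Qed.

Lemma I21_eq : I21 gam t0 u0 = 0.
Proof. unfold I21; rewrite dot_comm; exact I12_eq. Qed.

Lemma I22_eq : I22 gam t0 u0 = ka u0 ^ 2.
Proof. unfold I22; rewrite Hflow by assumption; frame_simpl; ring_sin2_cos2 (th t0 u0). Qed.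

Lemma II11_eq : II11 gam th t0 u0 = - (g u0 ^ 2 * psi2 gam th t0 u0).
Proof. unfold II11, psi2; rewrite (duV_duV_decomp reg0), kappa_Nor; frame_simpl; ring. Qed.

Lemma II12_eq : II12 gam th t0 u0 = g u0 * ka u0 * psi3 gam th t0 u0.
Proof.
  unfold II12; change (duV (dtV gam) t0 u0) with (vDerive (fun u => dtV gam t0 u) u0).
  rewrite (is_vderive_unique _ _ _ (is_vderive_dtV_u u0 Hk0)); exact flow_velocity_du_betath.
Qed.

Lemma II21_eq : II21 gam th t0 u0 = g u0 * ka u0 * psi3 gam th t0 u0.
Proof. unfold II21; rewrite dtV_duV_gam; exact flow_velocity_du_betath. Qed.


Lemma is_vderive_duV_t : is_vderive (fun t => duV gam t u0) t0 Pt.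
Proof. exact (smoothV_is_vderive_t a tbar (false :: nil) gam t0 u0 Hgam strip_t0). Qed.

Lemma is_vderive_duV_duV_t : is_vderive (fun t => duV (duV gam) t u0) t0 Qt.
Proof. exact (smoothV_is_vderive_t a tbar (false :: false :: nil) gam t0 u0 Hgam strip_t0). Qed.

Lemma is_vderive_dtV_t : is_vderive (fun t => dtV gam t u0) t0 (dtV (dtV gam) t0 u0).
Proof. exact (smoothV_is_vderive_t a tbar (true :: nil) gam t0 u0 Hgam strip_t0). Qed.

Lemma is_derive_th_t : is_derive (fun t => th t u0) t0 (ups t0 u0).
Proof. rewrite <- Hups by assumption; apply Derive_correct, (Hth t0 u0 strip_t0). Qed.

Lemma is_vderive_Tan_t : is_vderive (fun t => Tan gam t u0) t0
  (vscal (/ g u0) (vadd Pt (vscal (- dot Pt (Tn u0)) (Tn u0)))).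
Proof. exact (is_vderive_vunit _ t0 _ is_vderive_duV_t (dot_duV_pos reg0 u0)). Qed.

Lemma is_vderive_curvature_vector_t : exists DK,
  is_vderive (fun t => curvature_vector (duV gam t u0) (duV (duV gam) t u0)) t0 DK /\
  dot DK (Bn u0) = / g u0 ^ 2 *
    (dot Qt (Bn u0) - dot (duV (duV gam) t0 u0) (Tn u0) * (/ g u0 * dot Pt (Bn u0))).
Proof.
  eexists; split.
  - unfold curvature_vector; apply is_vderive_vscal.
    + apply (is_derive_inv (fun t => vnorm (duV gam t u0) ^ 2));
        [|apply pow_nonzero, (speed_neq0 reg0)].
      apply (is_derive_pow (fun t => vnorm (duV gam t u0))).
      apply (is_derive_sqrt (fun t => dot (duV gam t u0) (duV gam t u0)));
        [apply is_derive_dot; apply is_vderive_duV_t | apply (dot_duV_pos reg0)].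
    + apply is_vderive_vadd; [apply is_vderive_duV_duV_t|].
      apply is_vderive_vscal; [apply is_derive_Ropp, is_derive_dot|];
        [apply is_vderive_duV_duV_t | apply is_vderive_Tan_t | apply is_vderive_Tan_t].
  - cbv beta; change (vunit (duV gam t0 u0)) with (Tn u0).
    change (vnorm (duV gam t0 u0)) with (g u0).
    dot_expand; rewrite Tan_Bin_orth, (duV_duV_Bin_orth reg0); ring.
Qed.

Lemma dtV_dtV_gam_betath :
  dot (dtV (dtV gam) t0 u0) (be u0) = ka u0 * ups t0 u0
    + / g u0 ^ 2 * (dot Qt (Bn u0) - dot (duV (duV gam) t0 u0) (Tn u0) * (/ g u0 * dot Pt (Bn u0))).
Proof.
  destruct is_vderive_curvature_vector_t as [DK [HDK HDKB]]; rewrite <- HDKB.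
  pose proof (is_vderive_vadd _ _ t0 _ _
    (is_vderive_vscal _ _ t0 _ _ (is_derive_cos_comp _ _ _ is_derive_th_t) HDK)
    (is_vderive_vscal _ _ t0 _ _ (is_derive_sin_comp _ _ _ is_derive_th_t)
       (is_vderive_cross _ _ t0 _ _ is_vderive_Tan_t HDK))) as HF.
  (* The flow equation is only assumed for [t >= 0], so at [t0 = 0] the two curves are only
     known to agree to the right of [t0]. *)
  destruct (strip_locally a tbar t0 strip_t0) as [d Hd].
  rewrite (is_vderive_right_unique _ _ t0 _ _ d (cond_pos d) is_vderive_dtV_t HF).
  2: { intros t Ht.
       assert (Hst : strip t) by (apply Hd; rewrite Rabs_pos_eq; lra).
       rewrite Hflow, kappa_nuth, (curvature_vector_eq (regular_in_strip t Hst))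
         by lra || apply Hst.
       reflexivity. }
  rewrite <- (curvature_vector_eq reg0), kappa_Nor, !cross_scal_r.
  change (cross (Tn u0) (Nn u0)) with (Bn u0).
  assert (HNbe : cross (Nn u0) (be u0) = vscal (cos (th t0 u0)) (Tn u0)).
  { unfold betath, Bin; rewrite cross_add_r, !cross_scal_r, cross_self,
      (cross_N_cross_orthonormal _ _ (Nor_unit gam t0 u0 Hk0) (Tan_Nor_orth reg0 u0)).
    vring. }
  assert (Hbe_T : cross (be u0) (Tn u0) =
    vadd (vscal (sin (th t0 u0)) (Bn u0)) (vscal (cos (th t0 u0)) (Nn u0))).
  { unfold betath, Bin; rewrite cross_add_l, !cross_scal_l,
      (cross_cross_orthonormal_T _ _ (Tan_unit reg0 u0) (Tan_Nor_orth reg0 u0)),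
      (cross_anti (Nor gam t0 u0)).
    vring. }
  (* [(∂_t T × N) · β = cos θ (∂_t T · T) = 0] and [(T × DK) · β = DK · (β × T)]. *)
  dot_expand; rewrite !dot_cross_l, HNbe, (dot_comm (Tn u0) (cross DK _)), dot_cross_l, Hbe_T.
  frame_simpl; ring_sin2_cos2 (th t0 u0).
Qed.

Lemma ds_ds_curvature : ds gam (ds gam (kappa gam)) t0 u0 =
  (du (du (kappa gam)) t0 u0 / g u0 - du (kappa gam) t0 u0 * du (speed gam) t0 u0 / g u0 ^ 2)
  / g u0.
Proof.
  unfold ds at 1; f_equal; apply is_derive_unique; unfold ds.
  eapply is_derive_eq.
  - apply (is_derive_Rmult (fun u => du (kappa gam) t0 u) (fun u => / g u)).
    + apply is_derive_du_curvature.
    + apply is_derive_inv; [apply is_derive_speed_u | apply (speed_neq0 reg0)].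
  - field; apply (speed_neq0 reg0).
Qed.

Lemma II22_eq : II22 gam th t0 u0 = ka u0 ^ 2 * framed_chi gam th ups t0 u0.
Proof.
  destruct is_vderive_flow_velocity_du as [D [HD HDB]].
  unfold II22; rewrite dtV_dtV_gam_betath, (dtV_duV_duV_gam D HD), HDB, dtV_duV_gam,
    flow_velocity_du_Bin, <- du_speed.
  unfold framed_chi; cbv zeta; rewrite ds_ds_curvature; unfold ds, psi1, psi2.
  pose proof (speed_neq0 reg0 u0); assert (ka u0 <> 0) by lra.
  field; auto.
Qed.

Lemma fundamental_forms_eq :
  I11 gam t0 u0 = g u0 ^ 2 /\ I12 gam t0 u0 = 0 /\ I21 gam t0 u0 = 0 /\
  I22 gam t0 u0 = ka u0 ^ 2 /\
  II11 gam th t0 u0 = - (g u0 ^ 2 * psi2 gam th t0 u0) /\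
  II12 gam th t0 u0 = g u0 * ka u0 * psi3 gam th t0 u0 /\
  II21 gam th t0 u0 = g u0 * ka u0 * psi3 gam th t0 u0 /\
  II22 gam th t0 u0 = ka u0 ^ 2 * framed_chi gam th ups t0 u0.
Proof.
  repeat split; auto using I11_eq, I12_eq, I21_eq, I22_eq, II11_eq, II12_eq, II21_eq, II22_eq.
Qed.

End TrajectorySurface.

Theorem mainTheorem1
  (tbar : Rbar) (a : R) (gam : R -> R -> V3) (th ups : R -> R -> R) :
  Rbar_lt 0 tbar -> a < 0 ->
  (* regularity on an open strip (a, tbar) x R containing [0, tbar) x R *)
  smoothV_on (fun t => a < t /\ Rbar_lt t tbar) gam ->
  C12_on (fun t => a < t /\ Rbar_lt t tbar) th ->
  C1_on (fun t => a < t /\ Rbar_lt t tbar) ups ->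
  (* closed curves (u in S^1 = R / 2 pi Z), theta is S^1-valued *)
  (forall t u, gam t (u + 2 * PI) = gam t u) ->
  (forall t u, exists k : Z, th t (u + 2 * PI) = th t u + 2 * PI * IZR k) ->
  (forall t u, ups t (u + 2 * PI) = ups t u) ->
  (* regular parametrizations *)
  (forall t u, a < t -> Rbar_lt t tbar -> speed gam t u > 0) ->
  (* framed curvature flow with theta-velocity ups *)
  (forall t u, 0 <= t -> Rbar_lt t tbar ->
     dtV gam t u = vscal (kappa gam t u) (nuth gam th t u)) ->
  (forall t u, 0 <= t -> Rbar_lt t tbar -> dt th t u = ups t u) ->
  forall t u, 0 <= t -> Rbar_lt t tbar -> kappa gam t u > 0 ->
    let k := kappa gam t u in
    let p1 := psi1 gam th t u in
    let p2 := psi2 gam th t u in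
    let p3 := psi3 gam th t u in
    let chi := ups t u / k
               + (k * ds gam (psi3 gam th) t u + 2 * ds gam (kappa gam) t u * p3) / k ^ 3 * p1
               + (ds gam (ds gam (kappa gam)) t u - k * p3 ^ 2) / k ^ 3 * p2 in
    meanH gam th t u = - p2 + chi /\
    gaussK gam th t u = - p3 ^ 2 - p2 * chi.
Proof.
  intros _ Ha Hgam Hth _ _ _ _ Hspeed Hflow Hups t u Ht Htb Hk k p1 p2 p3 chi.
  destruct (fundamental_forms_eq a tbar gam th ups Hgam Hth Hspeed Hflow Hups t u Ha Ht Htb Hk)
    as (HI11 & HI12 & HI21 & HI22 & HII11 & HII12 & HII21 & HII22).
  assert (Hg : speed gam t u <> 0) by (apply Rgt_not_eq, Hspeed; [lra | exact Htb]).
  unfold meanH, gaussK, detI, detII.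
  rewrite HI11, HI12, HI21, HI22, HII11, HII12, HII21, HII22.
  change chi with (framed_chi gam th ups t u); subst p2 p3 k.
  split; field; lra.
Qed.
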